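(* Let $\mathrm{Spin}(7)$ act on the unit sphere $S^7\subset\mathbb{O}$ by $(A,B,B)\cdot x=B(x)$, so that $S^7=\mathrm{Spin}(7)/G_2$ with $G_2$ the isotropy group of $1$. Let $F$ be a $\mathrm{Spin}(7)$-invariant Finsler metric on $S^7$. If some nonzero $X\in\mathrm{Lie}(\mathrm{Spin}(7))$ generates a Killing vector field of constant length for $F$, then $F$ is a symmetric Riemannian metric; more precisely, $F$ is a positive constant multiple of the standard round Riemannian metric on $S^7$.
   Context: $\mathbb{O}$ denotes the Cayley numbers, $\mathbb{O}=\mathbb{H}\oplus\mathbb{H}$ with product $(q_1,q_2)(s_1,s_2)=(q_1s_1-\overline{s_2}q_2,\ s_2q_1+q_2\overline{s_1})$, conjugation $\overline{(q_1,q_2)}=(\overline{q_1},-q_2)$ and inner product $\langle x,y\rangle=\mathrm{Re}(\overline{x}y)$, $\mathrm{Re}(q_1,q_2)=\mathrm{Re}(q_1)$. A triality triple is $(A,B,C)\in\mathrm{SO}(8)^3$ with $A(x)B(y)=C(xy)$ for all $x,y$; these form $\mathrm{Spin}(8)$. $\mathrm{Spin}(7)$ is the subgroup of triples with $B=C$ (equivalently $A(1)=1$), and $G_2$ the subgroup with $A=B=C$ (automorphisms of $\mathbb{O}$). A Killing vector field of constant length is a Killing field $X$ with $F(X_p)$ independent of $p$. Finsler metric: continuous $F:TM\to[0,\infty)$, smooth off the zero section, positive, positively $1$-homogeneous, with positive definite fiberwise Hessian of $F^2/2$. *)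

From Stdlib Require Import Reals Lra.
Open Scope R_scope.

Record H := mkH { q0 : R; q1 : R; q2 : R; q3 : R }.

Definition Hadd (a b : H) : H :=
  mkH (q0 a + q0 b) (q1 a + q1 b) (q2 a + q2 b) (q3 a + q3 b).
Definition Hopp (a : H) : H := mkH (- q0 a) (- q1 a) (- q2 a) (- q3 a).
Definition Hsub (a b : H) : H := Hadd a (Hopp b).
Definition Hconj (a : H) : H := mkH (q0 a) (- q1 a) (- q2 a) (- q3 a).
(* Hamilton product, basis 1, i, j, k with i j = k *)
Definition Hmul (a b : H) : H :=
  mkH (q0 a * q0 b - q1 a * q1 b - q2 a * q2 b - q3 a * q3 b)
      (q0 a * q1 b + q1 a * q0 b + q2 a * q3 b - q3 a * q2 b)
      (q0 a * q2 b - q1 a * q3 b + q2 a * q0 b + q3 a * q1 b)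
      (q0 a * q3 b + q1 a * q2 b - q2 a * q1 b + q3 a * q0 b).

Definition Oct : Type := (H * H)%type.

Definition Omul (x y : Oct) : Oct :=
  let (a1, a2) := x in let (b1, b2) := y in
  (Hsub (Hmul a1 b1) (Hmul (Hconj b2) a2), Hadd (Hmul b2 a1) (Hmul a2 (Hconj b1))).
Definition Oconj (x : Oct) : Oct := (Hconj (fst x), Hopp (snd x)).
Definition ORe (x : Oct) : R := q0 (fst x).
Definition Oinner (x y : Oct) : R := ORe (Omul (Oconj x) y).
Definition Onorm (x : Oct) : R := sqrt (Oinner x x).

Definition Ocoord (x : Oct) (i : nat) : R :=
  match i with
  | 0%nat => q0 (fst x) | 1%nat => q1 (fst x) | 2%nat => q2 (fst x)
  | 3%nat => q3 (fst x) | 4%nat => q0 (snd x) | 5%nat => q1 (snd x)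
  | 6%nat => q2 (snd x) | 7%nat => q3 (snd x) | _ => 0 end.
Definition Oof (f : nat -> R) : Oct :=
  (mkH (f 0%nat) (f 1%nat) (f 2%nat) (f 3%nat),
   mkH (f 4%nat) (f 5%nat) (f 6%nat) (f 7%nat)).
Definition Ozero : Oct := Oof (fun _ => 0).
Definition Oone : Oct := Oof (fun i => if Nat.eqb i 0 then 1 else 0).
Definition Oadd (x y : Oct) : Oct := Oof (fun i => Ocoord x i + Ocoord y i).
Definition Oscale (r : R) (x : Oct) : Oct := Oof (fun i => r * Ocoord x i).
Definition Osub (x y : Oct) : Oct := Oadd x (Oscale (-1) y).

(* ---------- 8x8 real matrices (entries with indices < 8 are used) ---------- *)
Definition Mat : Type := nat -> nat -> R.
Definition mapp (M : Mat) (x : Oct) : Oct :=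
  Oof (fun i => sum_f_R0 (fun j => M i j * Ocoord x j) 7).
Definition idM : Mat := fun i j => if Nat.eqb i j then 1 else 0.

Definition minor (M : Mat) (j : nat) : Mat :=
  fun r k => M (S r) (if Nat.ltb k j then k else S k).
Fixpoint detn (n : nat) (M : Mat) : R :=
  match n with
  | O => 1
  | S m => sum_f_R0 (fun j => (-1) ^ j * M 0%nat j * detn m (minor M j)) m
  end.

Definition orthM (M : Mat) : Prop :=
  forall i j, (i < 8)%nat -> (j < 8)%nat ->
    sum_f_R0 (fun k => M k i * M k j) 7 = idM i j.
Definition SO8 (M : Mat) : Prop := orthM M /\ detn 8 M = 1.

Record Tri := mkTri { tA : Mat; tB : Mat; tC : Mat }.

Definition Spin8 (g : Tri) : Prop :=
  SO8 (tA g) /\ SO8 (tB g) /\ SO8 (tC g) /\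
  forall x y, Omul (mapp (tA g) x) (mapp (tB g) y) = mapp (tC g) (Omul x y).
Definition Spin7 (g : Tri) : Prop :=
  Spin8 g /\ forall x, mapp (tB g) x = mapp (tC g) x.

(* Lie(Spin(7)): velocities at t = 0 of curves in Spin(7) through the identity
   (Spin(7) being a closed subgroup / embedded submanifold of the triples of
   8x8 matrices, this is its tangent space at the identity). *)
Definition LieSpin7 (X : Tri) : Prop :=
  exists gam : R -> Tri,
    (forall t, Spin7 (gam t)) /\
    (forall i j, (i < 8)%nat -> (j < 8)%nat ->
       tA (gam 0) i j = idM i j /\ tB (gam 0) i j = idM i j /\
       tC (gam 0) i j = idM i j) /\
    (forall i j, (i < 8)%nat -> (j < 8)%nat ->
       derivable_pt_lim (fun t => tA (gam t) i j) 0 (tA X i j) /\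
       derivable_pt_lim (fun t => tB (gam t) i j) 0 (tB X i j) /\
       derivable_pt_lim (fun t => tC (gam t) i j) 0 (tC X i j)).

Definition TriNonzero (X : Tri) : Prop :=
  exists i j, (i < 8)%nat /\ (j < 8)%nat /\
    (tA X i j <> 0 \/ tB X i j <> 0 \/ tC X i j <> 0).

(* Fundamental (Killing) vector field on S^7 of X for the action (A,B,B).x = B(x):
   p |-> d/dt|_{t=0} gam(t).p = X_B p *)
Definition fundField (X : Tri) (p : Oct) : Oct := mapp (tB X) p.

Definition onS7 (p : Oct) : Prop := Oinner p p = 1.
Definition TS7 (p v : Oct) : Prop := onS7 p /\ Oinner p v = 0.

Definition zc (z : Oct * Oct) (i : nat) : R :=
  if Nat.ltb i 8 then Ocoord (fst z) i else Ocoord (snd z) (i - 8).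
Definition dist16 (z z' : Oct * Oct) : R :=
  sqrt (sum_f_R0 (fun i => (zc z i - zc z' i) ^ 2) 15).
Definition zshift (z : Oct * Oct) (i : nat) (t : R) : Oct * Oct :=
  (Oof (fun k => Ocoord (fst z) k + (if Nat.eqb k i then t else 0)),
   Oof (fun k => Ocoord (snd z) k + (if Nat.eqb (k + 8) i then t else 0))).

Definition cont_on (U : Oct * Oct -> Prop) (f : Oct * Oct -> R) : Prop :=
  forall z, U z -> forall eps, 0 < eps -> exists del, 0 < del /\
    forall z', dist16 z z' < del -> Rabs (f z' - f z) < eps.
Fixpoint Ck (k : nat) (U : Oct * Oct -> Prop) (f : Oct * Oct -> R) : Prop :=
  cont_on U f /\
  match k with
  | O => True
  | S m => forall i, (i < 16)%nat -> exists g : Oct * Oct -> R,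
             (forall z, U z -> derivable_pt_lim (fun t => f (zshift z i t)) 0 (g z))
             /\ Ck m U g
  end.
Definition Smooth (U : Oct * Oct -> Prop) (f : Oct * Oct -> R) : Prop :=
  forall k, Ck k U f.

(* Orthogonal projection onto T_p, and the retraction of the open set
   {p <> 0, proj_p v <> 0} of R^16 onto TS^7 minus the zero section. *)
Definition projT (p v : Oct) : Oct := Osub v (Oscale (Oinner v p / Oinner p p) p).
Definition Uoff (z : Oct * Oct) : Prop :=
  fst z <> Ozero /\ projT (fst z) (snd z) <> Ozero.
Definition extF (F : Oct -> Oct -> R) (z : Oct * Oct) : R :=
  F (Oscale (/ Onorm (fst z)) (fst z)) (projT (fst z) (snd z)).

(* F p v = F(v) for v in T_p S^7; only values on TS^7 are relevant.
   Smoothness of F on TS^7 \ 0 is expressed as smoothness of F composed with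
   the smooth retraction above (equivalent to smoothness on the submanifold). *)
Definition FinslerS7 (F : Oct -> Oct -> R) : Prop :=
  (forall p v, TS7 p v -> forall eps, 0 < eps -> exists del, 0 < del /\
     forall q w, TS7 q w -> dist16 (p, v) (q, w) < del ->
       Rabs (F q w - F p v) < eps) /\
  (forall p v, TS7 p v -> 0 <= F p v) /\
  Smooth Uoff (extF F) /\
  (forall p v, TS7 p v -> v <> Ozero -> 0 < F p v) /\
  (forall p v l, TS7 p v -> 0 < l -> F p (Oscale l v) = l * F p v) /\
  (* fiberwise Hessian of F^2/2 positive definite at every v <> 0 *)
  (forall p v w, TS7 p v -> v <> Ozero -> Oinner p w = 0 -> w <> Ozero ->
     exists (phi' : R -> R) (del h : R), 0 < del /\
       (forall t, Rabs t < del ->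
          derivable_pt_lim (fun s => (F p (Oadd v (Oscale s w))) ^ 2 / 2) t (phi' t)) /\
       derivable_pt_lim phi' 0 h /\ 0 < h).

(* Spin(7)-invariance for the action (A,B,B).x = B(x) (differential: v |-> B v) *)
Definition Spin7_invariant (F : Oct -> Oct -> R) : Prop :=
  forall g, Spin7 g -> forall p v, TS7 p v ->
    F (mapp (tB g) p) (mapp (tB g) v) = F p v.

Definition constant_length (F : Oct -> Oct -> R) (X : Tri) : Prop :=
  exists c, forall p, onS7 p -> F p (fundField X p) = c.

From Pilot Require Import Defs.
From Stdlib Require Import Reals Lra Lia.
From mathcomp Require all_boot all_algebra Rstruct.
Open Scope R_scope.

(** Spin(7) acts transitively on the unit tangent bundle of S^7, so an
    invariant Finsler metric F takes one value c on all unit tangent vectors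
    and, by positive homogeneity, F(p,v) = c |v|.

    The group elements used are g(u,v) = (A,B,B) with B = L_u L_v and
    A(x) = u((v x v) u) for imaginary unit octonions u, v: the Moufang identity
    gives the triality relation A(x)B(y) = B(xy), and A, B are orthogonal of
    determinant 1 (det L_a is, up to a positive factor, a square).
    Transitivity follows in two moves:
    - for an imaginary unit u ⟂ p, g(-(up), u) maps p to 1, so every unit
      tangent vector is equivalent to some (1, y) with y imaginary;
    - for orthonormal imaginary w, z and u ⟂ w, z, the same kind of element
      maps (w, z) to (1, ρ_u(wz)), ρ_u the reflection in u^⟂.  Reflections
      of wz reach every unit imaginary t ⟂ w, z; choosing w, z ⟂ y in the
      coordinate planes (e1,e2), (e3,e4) relates (1, y) with (1, e7). *)

Ltac destruct_oct x := destruct x as [[? ? ? ?] [? ? ? ?]].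

Ltac oct_unfold := cbv beta iota zeta delta [Omul Oadd Oscale Osub Oof Oone Ozero
  ORe Oinner Oconj Hmul Hsub Hadd Hopp Hconj Ocoord fst snd
  Defs.q0 Defs.q1 Defs.q2 Defs.q3 Nat.eqb sum_f_R0 mapp idM].

Lemma Oct_ext (x y : Oct) :
  Ocoord x 0 = Ocoord y 0 -> Ocoord x 1 = Ocoord y 1 -> Ocoord x 2 = Ocoord y 2 ->
  Ocoord x 3 = Ocoord y 3 -> Ocoord x 4 = Ocoord y 4 -> Ocoord x 5 = Ocoord y 5 ->
  Ocoord x 6 = Ocoord y 6 -> Ocoord x 7 = Ocoord y 7 -> x = y.
Proof. destruct_oct x; destruct_oct y; simpl; intros; subst; reflexivity. Qed.

Ltac oct_ring := apply Oct_ext; oct_unfold; ring.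

Lemma coord_Oof (f : nat -> R) (i : nat) : (i < 8)%nat -> Ocoord (Oof f) i = f i.
Proof. intro Hi. do 8 (destruct i as [|i]; [reflexivity|]). lia. Qed.

Lemma Oinner_sum (x y : Oct) :
  Oinner x y = sum_f_R0 (fun k => Ocoord x k * Ocoord y k) 7.
Proof. destruct_oct x; destruct_oct y. oct_unfold; ring. Qed.

Definition ebasis (j : nat) : Oct := Oof (fun i => if Nat.eqb i j then 1 else 0).

Definition matof (f : Oct -> Oct) : Mat := fun i j => Ocoord (f (ebasis j)) i.
Definition is_linear (f : Oct -> Oct) : Prop := forall x, f x = mapp (matof f) x.
Definition is_isometry (f : Oct -> Oct) : Prop :=
  forall x y, Oinner (f x) (f y) = Oinner x y.

Lemma linear_comp (f g : Oct -> Oct) :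
  is_linear f -> is_linear g -> is_linear (fun x => f (g x)).
Proof.
intros Hf Hg x.
assert (Ecol : forall j, f (g (ebasis j)) = mapp (matof f) (g (ebasis j)))
  by (intro; apply Hf).
assert (Ex : f (g x) = mapp (matof f) (mapp (matof g) x)) by (rewrite <- Hg; apply Hf).
rewrite Ex.
apply Oct_ext; unfold mapp at 1 3, matof at 3; cbv beta; simpl; rewrite ?Ecol;
  unfold mapp, matof; simpl; ring.
Qed.

Lemma linear_mulL (a : Oct) : is_linear (Omul a).
Proof. intro x. destruct_oct a; destruct_oct x. unfold matof, ebasis; oct_ring. Qed.

Lemma linear_mulR (a : Oct) : is_linear (fun x => Omul x a).
Proof. intro x. destruct_oct a; destruct_oct x. unfold matof, ebasis; oct_ring. Qed.

Lemma inner_mulL (a x y : Oct) : Oinner (Omul a x) (Omul a y) = Oinner a a * Oinner x y.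
Proof. rewrite !Oinner_sum. destruct_oct a; destruct_oct x; destruct_oct y. oct_unfold; ring. Qed.

Lemma inner_mulR (a x y : Oct) : Oinner (Omul x a) (Omul y a) = Oinner a a * Oinner x y.
Proof. rewrite !Oinner_sum. destruct_oct a; destruct_oct x; destruct_oct y. oct_unfold; ring. Qed.

Lemma isometry_mulL (a : Oct) : Oinner a a = 1 -> is_isometry (Omul a).
Proof. intros Ha x y. rewrite inner_mulL, Ha; ring. Qed.

Lemma isometry_mulR (a : Oct) : Oinner a a = 1 -> is_isometry (fun x => Omul x a).
Proof. intros Ha x y. rewrite inner_mulR, Ha; ring. Qed.

Lemma isometry_comp (f g : Oct -> Oct) :
  is_isometry f -> is_isometry g -> is_isometry (fun x => f (g x)).
Proof. intros Hf Hg x y. rewrite Hf; apply Hg. Qed.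

Lemma inner_basis (i j : nat) : (i < 8)%nat -> (j < 8)%nat ->
  Oinner (ebasis i) (ebasis j) = idM i j.
Proof.
intros Hi Hj. rewrite Oinner_sum.
do 8 (destruct i as [|i];
  [do 8 (destruct j as [|j]; [unfold ebasis, idM; simpl; ring|]); lia|]).
lia.
Qed.

Lemma isometry_orth (f : Oct -> Oct) : is_isometry f -> orthM (matof f).
Proof.
intros Hf i j Hi Hj. unfold matof.
rewrite <- inner_basis, <- (Hf (ebasis i) (ebasis j)) by assumption.
symmetry; apply Oinner_sum.
Qed.

(** ** Determinants

    [detn] is the Laplace expansion along the first row; it agrees
    with the MathComp determinant of the corresponding matrix, from which we
    import multiplicativity and invariance under transposition. *)

Definition Mmul (M N : Mat) : Mat := fun i j => sum_f_R0 (fun k => M i k * N k j) 7.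
Definition Mtr (M : Mat) : Mat := fun i j => M j i.

Module MatrixDet.
Import all_boot all_algebra Rstruct GRing.Theory.

Definition mx (n : nat) (M : Mat) : 'M[R]_n := \matrix_(i < n, j < n) M i j.

Lemma sum_f_R0_big (f : nat -> R) (n : nat) :
  sum_f_R0 f n = (\sum_(k < n.+1) f k)%R.
Proof.
elim: n => [|n IH] /=; first by rewrite big_ord_recr big_ord0 /= GRing.add0r.
by rewrite IH [in RHS]big_ord_recr.
Qed.

Lemma pow_expr (x : R) (n : nat) : x ^ n = (x ^+ n)%R.
Proof. by elim: n => //= n ->; rewrite GRing.exprS. Qed.

Lemma lebE (m n : nat) : Nat.leb m n = (m <= n)%N.
Proof. by elim: m n => [|m IH] [|n] //=; rewrite IH. Qed.

Lemma eqbE (m n : nat) : Nat.eqb m n = (m == n)%N.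
Proof. by elim: m n => [|m IH] [|n] //=; rewrite IH. Qed.

Lemma detn_det (n : nat) (M : Mat) : detn n M = (\det (mx n M))%R.
Proof.
elim: n M => [|n IH] M; first by rewrite /= det_mx00.
rewrite /= sum_f_R0_big (expand_det_row _ ord0).
apply: eq_bigr => j _.
rewrite IH /cofactor mxE /= pow_expr add0n GRing.mulrA [(M _ _ * _)%R]GRing.mulrC.
congr (_ * _)%R; congr (\det _)%R; apply/matrixP => r k.
rewrite !mxE /= /minor /bump /= /Nat.ltb lebE.
by case: (ltnP k j).
Qed.

Lemma det_ext8 (M N : Mat) :
  (forall i j, (i < 8)%coq_nat -> (j < 8)%coq_nat -> M i j = N i j) ->
  detn 8 M = detn 8 N.
Proof.
move=> H; rewrite !detn_det; congr (\det _)%R; apply/matrixP => i j; rewrite !mxE.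
by apply: H; apply/ltP.
Qed.

Lemma det_mul8 (M N : Mat) : detn 8 (Mmul M N) = detn 8 M * detn 8 N.
Proof.
rewrite !detn_det RmultE -det_mulmx; congr (\det _)%R; apply/matrixP => i j.
rewrite !mxE /Mmul sum_f_R0_big; apply: eq_bigr => k _; by rewrite !mxE.
Qed.

Lemma det_tr8 (M : Mat) : detn 8 (Mtr M) = detn 8 M.
Proof.
rewrite !detn_det -det_tr; congr (\det _)%R; apply/matrixP => i j.
by rewrite !mxE.
Qed.

Lemma det_scal8 (c : R) (M : Mat) : detn 8 (fun i j => c * M i j) = c ^ 8 * detn 8 M.
Proof.
rewrite !detn_det pow_expr RmultE -detZ; congr (\det _)%R; apply/matrixP => i j.
by rewrite !mxE.
Qed.

Lemma det_id8 : detn 8 idM = 1.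
Proof.
rewrite detn_det; transitivity (\det (1%:M : 'M[R]_8))%R; last by rewrite det1.
congr (\det _)%R; apply/matrixP => i j.
rewrite !mxE /idM eqbE.
have -> : (nat_of_ord i == nat_of_ord j) = (i == j) by [].
by case: (i == j); rewrite ?mulr1n ?mulr0n.
Qed.
End MatrixDet.

Lemma matof_comp (f g : Oct -> Oct) (i j : nat) : is_linear f -> (i < 8)%nat ->
  matof (fun x => f (g x)) i j = Mmul (matof f) (matof g) i j.
Proof.
intros Hf Hi. unfold matof at 1. rewrite Hf. unfold mapp.
rewrite coord_Oof by exact Hi. reflexivity.
Qed.

Lemma det_comp (f g : Oct -> Oct) : is_linear f ->
  detn 8 (matof (fun x => f (g x))) = detn 8 (matof f) * detn 8 (matof g).
Proof.
intro Hf. rewrite <- MatrixDet.det_mul8. apply MatrixDet.det_ext8.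
intros i j Hi Hj. apply matof_comp; assumption.
Qed.

Lemma det_orth_sq (M : Mat) : orthM M -> detn 8 M * detn 8 M = 1.
Proof.
intro H. rewrite <- MatrixDet.det_tr8 at 1. rewrite <- MatrixDet.det_mul8.
rewrite <- MatrixDet.det_id8. apply MatrixDet.det_ext8.
intros i j Hi Hj. apply H; assumption.
Qed.

(** An isometry f with f = k^-1 h∘h for a linear h has determinant 1:
    det f = ±1 and k^8 det f = (det h)^2 >= 0. *)
Lemma det_one_of_square (f h : Oct -> Oct) (k : R) :
  is_linear f -> is_isometry f -> is_linear h -> k <> 0 ->
  (forall x, h (h x) = Oscale k (f x)) -> detn 8 (matof f) = 1.
Proof.
intros Hf Hiso Hh Hk Hhh.
assert (Esq : detn 8 (matof h) * detn 8 (matof h) = k ^ 8 * detn 8 (matof f)).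
{ rewrite <- det_comp by exact Hh. rewrite <- MatrixDet.det_scal8.
  apply MatrixDet.det_ext8. intros i j Hi Hj. unfold matof. rewrite Hhh.
  unfold Oscale. apply coord_Oof; exact Hi. }
assert (Hsq := det_orth_sq _ (isometry_orth f Hiso)).
assert (Hk8 : 0 < k ^ 8).
{ replace (k ^ 8) with ((k ^ 4) * (k ^ 4)) by ring.
  apply Rsqr_pos_lt, pow_nonzero, Hk. }
assert (Hnonneg : 0 <= detn 8 (matof f)).
{ apply Rmult_le_reg_l with (k ^ 8); [exact Hk8|].
  rewrite <- Esq, Rmult_0_r. apply Rle_0_sqr. }
nra.
Qed.

(** The subalgebra generated by one element is associative, so
    L_{t+a}^2 = (t^2 - |a|^2) + (2t + 2 Re a) L_a, and similarly on the right. *)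
Definition shift (t : R) (a : Oct) : Oct := Oadd (Oscale t Oone) a.

Lemma mulL_shift_sq (t : R) (a x : Oct) :
  Omul (shift t a) (Omul (shift t a) x) =
  Oadd (Oscale (t * t - Oinner a a) x) (Oscale (2 * t + 2 * ORe a) (Omul a x)).
Proof. destruct_oct a; destruct_oct x. unfold shift; oct_ring. Qed.

Lemma mulR_shift_sq (t : R) (a x : Oct) :
  Omul (Omul x (shift t a)) (shift t a) =
  Oadd (Oscale (t * t - Oinner a a) x) (Oscale (2 * t + 2 * ORe a) (Omul x a)).
Proof. destruct_oct a; destruct_oct x. unfold shift; oct_ring. Qed.

Lemma good_sign (a0 : R) : exists t, t * t = 1 /\ 2 * t + 2 * a0 <> 0.
Proof.
destruct (Req_dec a0 (-1)) as [E|E].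
- exists (-1). split; [ring|lra].
- exists 1. split; [ring|lra].
Qed.

Lemma det_mulL (a : Oct) : Oinner a a = 1 -> detn 8 (matof (Omul a)) = 1.
Proof.
intro Ha. destruct (good_sign (ORe a)) as [t [Ht Hk]].
apply (det_one_of_square _ (Omul (shift t a)) (2 * t + 2 * ORe a));
  [apply linear_mulL | apply isometry_mulL, Ha | apply linear_mulL | exact Hk |].
intro x. rewrite mulL_shift_sq, Ht, Ha. destruct_oct a; destruct_oct x. oct_ring.
Qed.

Lemma det_mulR (a : Oct) : Oinner a a = 1 -> detn 8 (matof (fun x => Omul x a)) = 1.
Proof.
intro Ha. destruct (good_sign (ORe a)) as [t [Ht Hk]].
apply (det_one_of_square _ (fun x => Omul x (shift t a)) (2 * t + 2 * ORe a));
  [apply linear_mulR | apply isometry_mulR, Ha | apply linear_mulR | exact Hk |].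
intro x. rewrite mulR_shift_sq, Ht, Ha. destruct_oct a; destruct_oct x. oct_ring.
Qed.

(** ** The Spin(7) elements g(u,v) *)

Definition imunit (u : Oct) : Prop := ORe u = 0 /\ Oinner u u = 1.

Definition spinB (u v : Oct) (x : Oct) : Oct := Omul u (Omul v x).
Definition spinA (u v : Oct) (x : Oct) : Oct := Omul u (Omul (Omul v (Omul x v)) u).

Lemma spinB_linear (u v : Oct) : is_linear (spinB u v).
Proof. exact (linear_comp _ _ (linear_mulL u) (linear_mulL v)). Qed.

Lemma spinA_linear (u v : Oct) : is_linear (spinA u v).
Proof.
exact (linear_comp _ _ (linear_mulL u)
         (linear_comp _ _ (linear_mulR u) (linear_comp _ _ (linear_mulL v) (linear_mulR v)))).
Qed.

Lemma spinB_isometry (u v : Oct) : imunit u -> imunit v -> is_isometry (spinB u v).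
Proof.
intros [_ Hu] [_ Hv]. exact (isometry_comp _ _ (isometry_mulL u Hu) (isometry_mulL v Hv)).
Qed.

Lemma spinA_isometry (u v : Oct) : imunit u -> imunit v -> is_isometry (spinA u v).
Proof.
intros [_ Hu] [_ Hv].
exact (isometry_comp _ _ (isometry_mulL u Hu)
  (isometry_comp _ _ (isometry_mulR u Hu)
    (isometry_comp _ _ (isometry_mulL v Hv) (isometry_mulR v Hv)))).
Qed.

Lemma spinB_det (u v : Oct) : imunit u -> imunit v -> detn 8 (matof (spinB u v)) = 1.
Proof.
intros [_ Hu] [_ Hv]. unfold spinB.
rewrite (det_comp (Omul u) (Omul v) (linear_mulL u)), !det_mulL by assumption. ring.
Qed.

Lemma spinA_det (u v : Oct) : imunit u -> imunit v -> detn 8 (matof (spinA u v)) = 1.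
Proof.
intros [_ Hu] [_ Hv]. unfold spinA.
rewrite (det_comp (Omul u) (fun x => Omul (Omul v (Omul x v)) u) (linear_mulL u)),
  (det_comp (fun x => Omul x u) (fun x => Omul v (Omul x v)) (linear_mulR u)),
  (det_comp (Omul v) (fun x => Omul x v) (linear_mulL v)).
rewrite det_mulL, det_mulR, det_mulL, det_mulR by assumption. ring.
Qed.

Lemma moufang_imaginary (a z w : Oct) : ORe a = 0 ->
  Omul (Omul a (Omul z a)) (Omul a w) = Oscale (- Oinner a a) (Omul a (Omul z w)).
Proof.
intro Ha. destruct_oct a; destruct_oct z; destruct_oct w.
cbv [ORe fst Defs.q0] in Ha. subst. oct_ring.
Qed.

Lemma triality (u v x y : Oct) : imunit u -> imunit v ->
  Omul (spinA u v x) (spinB u v y) = spinB u v (Omul x y).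
Proof.
intros [Hu0 Hu] [Hv0 Hv]. unfold spinA, spinB.
rewrite (moufang_imaginary u (Omul v (Omul x v)) (Omul v y) Hu0),
  (moufang_imaginary v x y Hv0), Hu, Hv.
destruct_oct u; destruct_oct x; destruct_oct y; destruct_oct v. oct_ring.
Qed.

Definition spin_elem (u v : Oct) : Tri :=
  mkTri (matof (spinA u v)) (matof (spinB u v)) (matof (spinB u v)).

Lemma spin_elem_Spin7 (u v : Oct) : imunit u -> imunit v -> Spin7 (spin_elem u v).
Proof.
intros Hu Hv. split; [|intro; reflexivity].
split; [|split; [|split]].
- split; [apply isometry_orth, spinA_isometry | apply spinA_det]; assumption.
- split; [apply isometry_orth, spinB_isometry | apply spinB_det]; assumption.
- split; [apply isometry_orth, spinB_isometry | apply spinB_det]; assumption.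
- intros x y. cbv [spin_elem tA tB tC].
  rewrite <- (spinA_linear u v x), <- (spinB_linear u v y),
    <- (spinB_linear u v (Omul x y)).
  apply triality; assumption.
Qed.

Lemma invariant_spinB (F : Oct -> Oct -> R) (u v p x : Oct) :
  Spin7_invariant F -> imunit u -> imunit v -> TS7 p x ->
  F (spinB u v p) (spinB u v x) = F p x.
Proof.
intros HF Hu Hv HT. rewrite (spinB_linear u v p), (spinB_linear u v x).
exact (HF (spin_elem u v) (spin_elem_Spin7 u v Hu Hv) p x HT).
Qed.

Lemma ORe_scale (c : R) (x : Oct) : ORe (Oscale c x) = c * ORe x.
Proof. destruct_oct x. oct_unfold. ring. Qed.

Lemma Oinner_scale (c : R) (x : Oct) :
  Oinner (Oscale c x) (Oscale c x) = c * c * Oinner x x.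
Proof. destruct_oct x. oct_unfold. ring. Qed.

Lemma ORe_mul (x y : Oct) : ORe (Omul x y) = 2 * ORe x * ORe y - Oinner x y.
Proof. destruct_oct x; destruct_oct y. oct_unfold. ring. Qed.

Lemma Oinner_one_l (y : Oct) : Oinner Oone y = ORe y.
Proof. destruct_oct y. oct_unfold. ring. Qed.

Lemma Oinner_sym (x y : Oct) : Oinner x y = Oinner y x.
Proof. destruct_oct x; destruct_oct y. oct_unfold. ring. Qed.

Lemma neg_square (m : Oct) :
  Omul (Oscale (-1) m) m = Osub (Oscale (Oinner m m) Oone) (Oscale (2 * ORe m) m).
Proof. destruct_oct m. oct_ring. Qed.

(** For imaginary u, w, z (Moufang identity and u z + z u = -2<u,z>):
    -(uw)(uz) = |u|^2 wz - 2<wz,u> u + 2<u,z> uw + 2|u|^2<w,z>. *)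
Lemma neg_mul_mul_imaginary (u w z : Oct) : ORe u = 0 -> ORe w = 0 -> ORe z = 0 ->
  Omul (Oscale (-1) (Omul u w)) (Omul u z) =
  Oadd (Oscale (Oinner u u) (Omul w z))
   (Oadd (Oscale (-2 * Oinner (Omul w z) u) u)
    (Oadd (Oscale (2 * Oinner u z) (Omul u w)) (Oscale (2 * Oinner u u * Oinner w z) Oone))).
Proof.
destruct_oct u; destruct_oct w; destruct_oct z. unfold ORe; simpl; intros -> -> ->.
oct_ring.
Qed.

Definition reflection (u k : Oct) : Oct := Osub k (Oscale (2 * Oinner k u) u).

Lemma spinB_to_one (u p : Oct) : imunit u -> Oinner u p = 0 -> Oinner p p = 1 ->
  imunit (Oscale (-1) (Omul u p)) /\ spinB (Oscale (-1) (Omul u p)) u p = Oone.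
Proof.
intros [Hu0 Hu] Hup Hp.
assert (Hre : ORe (Omul u p) = 0) by (rewrite ORe_mul, Hu0, Hup; ring).
assert (Hnorm : Oinner (Omul u p) (Omul u p) = 1) by (rewrite inner_mulL, Hu, Hp; ring).
split; [split|].
- rewrite ORe_scale, Hre. ring.
- rewrite Oinner_scale, Hnorm. ring.
- unfold spinB. rewrite neg_square, Hnorm, Hre.
  set (m := Omul u p). destruct_oct m. oct_ring.
Qed.

Lemma spinB_pair (u w z : Oct) : imunit u -> imunit w -> imunit z ->
  Oinner u z = 0 -> Oinner w z = 0 ->
  spinB (Oscale (-1) (Omul u w)) u z = reflection u (Omul w z).
Proof.
intros [Hu0 Hu] [Hw0 _] [Hz0 _] Huz Hwz. unfold spinB.
rewrite neg_mul_mul_imaginary, Hu, Huz, Hwz by assumption. unfold reflection.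
set (k := Omul w z). set (m := Omul u w).
destruct_oct k; destruct_oct m; destruct_oct u. oct_ring.
Qed.

Definition plane_vec (i j : nat) (c s : R) : Oct :=
  Oadd (Oscale c (ebasis i)) (Oscale s (ebasis j)).

Lemma Oinner_lin_l (c s : R) (a b y : Oct) :
  Oinner (Oadd (Oscale c a) (Oscale s b)) y = c * Oinner a y + s * Oinner b y.
Proof. destruct_oct a; destruct_oct b; destruct_oct y. oct_unfold. ring. Qed.

Lemma Oinner_ebasis (i : nat) (y : Oct) : (i < 8)%nat -> Oinner (ebasis i) y = Ocoord y i.
Proof.
intro Hi. destruct_oct y.
do 8 (destruct i as [|i]; [unfold ebasis; oct_unfold; ring|]). lia.
Qed.

Lemma Oinner_plane_vec (i j : nat) (c s : R) (y : Oct) : (i < 8)%nat -> (j < 8)%nat ->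
  Oinner (plane_vec i j c s) y = c * Ocoord y i + s * Ocoord y j.
Proof. intros Hi Hj. unfold plane_vec. rewrite Oinner_lin_l, !Oinner_ebasis; auto. Qed.

Lemma plane_vec_imunit (i j : nat) (c s : R) :
  (1 <= i < 8)%nat -> (1 <= j < 8)%nat -> i <> j -> c * c + s * s = 1 ->
  imunit (plane_vec i j c s).
Proof.
intros Hi Hj Hij Hcs. split.
- rewrite <- Oinner_one_l, Oinner_sym, Oinner_plane_vec by lia.
  assert (E : forall k, (1 <= k < 8)%nat -> Ocoord Oone k = 0).
  { intros k Hk. do 8 (destruct k as [|k]; [first [lia | reflexivity]|]). lia. }
  rewrite !E by lia. ring.
- unfold plane_vec at 1. rewrite Oinner_lin_l, !(Oinner_sym (ebasis _)).
  unfold plane_vec. rewrite !Oinner_lin_l, !inner_basis by lia. unfold idM.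
  rewrite !Nat.eqb_refl.
  replace (Nat.eqb i j) with false by (symmetry; apply Nat.eqb_neq; exact Hij).
  replace (Nat.eqb j i) with false by (symmetry; apply Nat.eqb_neq; lia).
  lra.
Qed.

Lemma perp_in_plane (a b : R) : exists c s, c * c + s * s = 1 /\ c * a + s * b = 0.
Proof.
destruct (Req_dec (a * a + b * b) 0) as [Z|NZ].
- exists 1, 0. split; [ring|]. assert (a = 0) by nra. subst. ring.
- set (r := sqrt (a * a + b * b)).
  assert (Hr : r * r = a * a + b * b) by (apply sqrt_sqrt; nra).
  assert (Hr0 : r <> 0) by (intro E; rewrite E in Hr; lra).
  exists (- b / r), (a / r). split; [|field; exact Hr0].
  replace (- b / r * (- b / r) + a / r * (a / r)) with ((a * a + b * b) / (r * r))
    by (field; exact Hr0).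
  rewrite Hr. field. exact NZ.
Qed.

Lemma imaginary_perp (p : Oct) : exists u, imunit u /\ Oinner u p = 0.
Proof.
destruct (perp_in_plane (Ocoord p 1) (Ocoord p 2)) as (c & s & Hcs & Hperp).
exists (plane_vec 1 2 c s). split.
- apply plane_vec_imunit; [lia | lia | lia | exact Hcs].
- rewrite Oinner_plane_vec by lia. exact Hperp.
Qed.

Lemma Oinner_self_eq0 (v : Oct) : Oinner v v = 0 -> v = Ozero.
Proof.
rewrite Oinner_sum. destruct_oct v. oct_unfold. intro Z.
apply Oct_ext; simpl; nra.
Qed.

Lemma Oinner_sub_self (k t : Oct) :
  Oinner (Osub k t) (Osub k t) = Oinner k k - 2 * Oinner k t + Oinner t t.
Proof. destruct_oct k; destruct_oct t. oct_unfold. ring. Qed.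

Lemma unit_inner_one (k t : Oct) : Oinner k k = 1 -> Oinner t t = 1 -> Oinner k t = 1 -> t = k.
Proof.
intros Hk Ht Hkt.
assert (E : Osub k t = Ozero) by (apply Oinner_self_eq0; rewrite Oinner_sub_self; lra).
destruct_oct k; destruct_oct t. revert E; oct_unfold; intro E. injection E; intros.
apply Oct_ext; simpl; lra.
Qed.

Lemma Oinner_nonneg (v : Oct) : 0 <= Oinner v v.
Proof. rewrite Oinner_sum. destruct_oct v. oct_unfold. nra. Qed.

Lemma Oinner_scale_sub (c : R) (k t y : Oct) :
  Oinner (Oscale c (Osub k t)) y = c * (Oinner k y - Oinner t y).
Proof. destruct_oct k; destruct_oct t; destruct_oct y. oct_unfold. ring. Qed.

Lemma ORe_scale_sub (c : R) (k t : Oct) : ORe (Oscale c (Osub k t)) = c * (ORe k - ORe t).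
Proof. destruct_oct k; destruct_oct t. oct_unfold. ring. Qed.

Lemma sub_scale_cancel (a b : R) (k t : Oct) :
  a * b = 1 -> Osub k (Oscale a (Oscale b (Osub k t))) = t.
Proof.
intro Hab. assert (Hb : b <> 0) by (intro E; rewrite E in Hab; lra).
replace a with (/ b) by (apply Rmult_eq_reg_r with b; [rewrite Hab; field|]; exact Hb).
destruct_oct k; destruct_oct t. apply Oct_ext; oct_unfold; field; exact Hb.
Qed.

Lemma reflection_onto (k t : Oct) : imunit k -> imunit t -> Oinner k t <> 1 ->
  exists c, imunit (Oscale c (Osub k t)) /\ reflection (Oscale c (Osub k t)) k = t.
Proof.
intros [Hk0 Hk] [Ht0 Ht] Hkt.
set (d := Oinner (Osub k t) (Osub k t)).
assert (Hd : d = 2 - 2 * Oinner k t) by (unfold d; rewrite Oinner_sub_self; lra).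
assert (Hd0 : 0 < d).
{ destruct (Rle_lt_or_eq_dec 0 d (Oinner_nonneg _)) as [Hpos|Hzero]; [exact Hpos|].
  exfalso. apply Hkt. lra. }
set (c := / sqrt d).
assert (Hcd : c * c * d = 1).
{ unfold c. rewrite <- Rinv_mult, sqrt_sqrt by lra. field. lra. }
exists c. split; [split|].
- rewrite ORe_scale_sub, Hk0, Ht0. ring.
- rewrite Oinner_scale. exact Hcd.
- unfold reflection. rewrite (Oinner_sym k), Oinner_scale_sub, (Oinner_sym t k), Hk.
  apply sub_scale_cancel. transitivity (c * c * d); [rewrite Hd; ring | exact Hcd].
Qed.

Lemma reflection_fixed (u k : Oct) : Oinner k u = 0 -> reflection u k = k.
Proof. intro H. unfold reflection. rewrite H. destruct_oct k; destruct_oct u. oct_ring. Qed.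

Lemma Oinner_mul_factor_l (w z : Oct) : Oinner (Omul w z) w = Oinner w w * ORe z.
Proof. destruct_oct w; destruct_oct z. oct_unfold. ring. Qed.

Lemma Oinner_mul_factor_r (w z : Oct) : Oinner (Omul w z) z = Oinner z z * ORe w.
Proof. destruct_oct w; destruct_oct z. oct_unfold. ring. Qed.

(** ** Orbits of Spin(7) on the unit tangent bundle *)

Section Orbits.

Variable F : Oct -> Oct -> R.
Hypothesis F_invariant : Spin7_invariant F.

Lemma tangent_to_one (p x : Oct) : TS7 p x -> Oinner x x = 1 ->
  exists y, imunit y /\ F p x = F Oone y.
Proof.
intros HT Hx. destruct (imaginary_perp p) as (u & Hu & Hup).
destruct (spinB_to_one u p Hu Hup (proj1 HT)) as [Hv Hp1].
set (v := Oscale (-1) (Omul u p)) in *.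
exists (spinB v u x). split; [split|].
- rewrite <- Oinner_one_l, <- Hp1, (spinB_isometry v u Hv Hu). exact (proj2 HT).
- rewrite (spinB_isometry v u Hv Hu). exact Hx.
- rewrite <- Hp1. symmetry. apply invariant_spinB; assumption.
Qed.

Lemma pair_to_reflection (u w z : Oct) : imunit u -> imunit w -> imunit z ->
  Oinner u w = 0 -> Oinner u z = 0 -> Oinner w z = 0 ->
  F w z = F Oone (reflection u (Omul w z)).
Proof.
intros Hu Hw Hz Huw Huz Hwz.
destruct (spinB_to_one u w Hu Huw (proj2 Hw)) as [Hv Hw1].
rewrite <- Hw1, <- (spinB_pair u w z) by assumption.
symmetry. apply invariant_spinB; [assumption | assumption | assumption |].
split; [exact (proj2 Hw) | exact Hwz].
Qed.

(** Hence (w, z) is equivalent to (1, t) for every imaginary unit t ⟂ w, z,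
    provided some imaginary unit u0 is orthogonal to w, z and wz: ρ_{u0}
    fixes wz, which covers the case t = wz not reached by ρ_{(wz - t)}. *)
Lemma pair_to_any (w z u0 t : Oct) : imunit w -> imunit z -> Oinner w z = 0 ->
  imunit u0 -> Oinner u0 w = 0 -> Oinner u0 z = 0 -> Oinner (Omul w z) u0 = 0 ->
  imunit t -> Oinner t w = 0 -> Oinner t z = 0 ->
  F w z = F Oone t.
Proof.
intros Hw Hz Hwz Hu0 Hu0w Hu0z Hku0 Ht Htw Htz.
set (k := Omul w z).
assert (Hk : imunit k).
{ split.
  - unfold k. rewrite ORe_mul, (proj1 Hw), Hwz. ring.
  - unfold k. rewrite inner_mulL, (proj2 Hw), (proj2 Hz). ring. }
assert (Hkw : Oinner k w = 0) by (unfold k; rewrite Oinner_mul_factor_l, (proj1 Hz); ring).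
assert (Hkz : Oinner k z = 0) by (unfold k; rewrite Oinner_mul_factor_r, (proj1 Hw); ring).
destruct (Req_dec (Oinner k t) 1) as [E|NE].
- rewrite (unit_inner_one k t (proj2 Hk) (proj2 Ht) E).
  rewrite <- (reflection_fixed u0 k Hku0).
  apply pair_to_reflection; assumption.
- destruct (reflection_onto k t Hk Ht NE) as (c & Hu & Href).
  rewrite <- Href. apply pair_to_reflection; try assumption.
  + rewrite Oinner_scale_sub, Hkw, Htw. ring.
  + rewrite Oinner_scale_sub, Hkz, Htz. ring.
Qed.

(** All imaginary units y give the same value F(1, y) = F(1, e7): choose
    w in the plane (e1, e2) and z in the plane (e3, e4), both orthogonal to y;
    then u0 = e7 is orthogonal to w, z and wz. *)
Lemma imaginary_to_e7 (y : Oct) : imunit y -> F Oone y = F Oone (ebasis 7).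
Proof.
intro Hy.
destruct (perp_in_plane (Ocoord y 1) (Ocoord y 2)) as (c1 & s1 & Hcs1 & Hperp1).
destruct (perp_in_plane (Ocoord y 3) (Ocoord y 4)) as (c2 & s2 & Hcs2 & Hperp2).
set (w := plane_vec 1 2 c1 s1). set (z := plane_vec 3 4 c2 s2).
assert (Hw : imunit w) by (apply plane_vec_imunit; [lia | lia | lia | exact Hcs1]).
assert (Hz : imunit z) by (apply plane_vec_imunit; [lia | lia | lia | exact Hcs2]).
assert (He7 : imunit (ebasis 7)) by (split; unfold ebasis; oct_unfold; ring).
assert (Hwz : Oinner w z = 0) by (unfold w, z, plane_vec, ebasis; oct_unfold; ring).
assert (He7w : Oinner (ebasis 7) w = 0) by (unfold w, plane_vec, ebasis; oct_unfold; ring).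
assert (He7z : Oinner (ebasis 7) z = 0) by (unfold z, plane_vec, ebasis; oct_unfold; ring).
assert (Hke7 : Oinner (Omul w z) (ebasis 7) = 0)
  by (unfold w, z, plane_vec, ebasis; oct_unfold; ring).
assert (Hyw : Oinner y w = 0)
  by (rewrite Oinner_sym; unfold w; rewrite Oinner_plane_vec by lia; exact Hperp1).
assert (Hyz : Oinner y z = 0)
  by (rewrite Oinner_sym; unfold z; rewrite Oinner_plane_vec by lia; exact Hperp2).
rewrite <- (pair_to_any w z (ebasis 7) y), <- (pair_to_any w z (ebasis 7) (ebasis 7));
  auto.
Qed.

Lemma unit_tangent_value (p x : Oct) : TS7 p x -> Oinner x x = 1 ->
  F p x = F Oone (ebasis 7).
Proof.
intros HT Hx. destruct (tangent_to_one p x HT Hx) as (y & Hy & E).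
rewrite E. apply imaginary_to_e7, Hy.
Qed.

End Orbits.

Lemma Oinner_scale_r (c : R) (p v : Oct) : Oinner p (Oscale c v) = c * Oinner p v.
Proof. destruct_oct p; destruct_oct v. oct_unfold. ring. Qed.

Lemma scale_scale_inv (n : R) (v : Oct) : n <> 0 -> Oscale n (Oscale (/ n) v) = v.
Proof. intro Hn. destruct_oct v. apply Oct_ext; oct_unfold; field; exact Hn. Qed.

Lemma homogeneous_from_unit (F : Oct -> Oct -> R) (c : R) :
  (forall p v l, TS7 p v -> 0 < l -> F p (Oscale l v) = l * F p v) ->
  (forall p x, TS7 p x -> Oinner x x = 1 -> F p x = c) ->
  forall p v, TS7 p v -> F p v = c * Onorm v.
Proof.
intros Hhom Hunit p v HT.
destruct (Req_dec (Oinner v v) 0) as [Z|NZ].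
- assert (E := Hhom p v 2 HT ltac:(lra)).
  assert (Hv0 : Oscale 2 v = v) by (rewrite (Oinner_self_eq0 v Z); oct_ring).
  rewrite Hv0 in E. unfold Onorm. rewrite Z, sqrt_0. lra.
- assert (Hpos : 0 < Oinner v v) by (pose proof (Oinner_nonneg v); lra).
  set (n := Onorm v).
  assert (Hn : 0 < n) by (apply sqrt_lt_R0, Hpos).
  assert (Hnn : n * n = Oinner v v) by (apply sqrt_sqrt; lra).
  set (x := Oscale (/ n) v).
  assert (Hx : Oinner x x = 1) by (unfold x; rewrite Oinner_scale, <- Hnn; field; lra).
  assert (HTx : TS7 p x)
    by (split; [exact (proj1 HT) | unfold x; rewrite Oinner_scale_r, (proj2 HT); ring]).
  rewrite <- (scale_scale_inv n v) by lra. fold x.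
  rewrite (Hhom p x n HTx Hn), (Hunit p x HTx Hx). ring.
Qed.

Theorem mainTheorem5 (F : Oct -> Oct -> R) (X : Tri) :
  FinslerS7 F ->
  Spin7_invariant F ->
  LieSpin7 X ->
  TriNonzero X ->
  constant_length F X ->
  exists c : R, 0 < c /\
    forall p v : Oct, TS7 p v -> F p v = c * Onorm v.
Proof.
intros (_ & _ & _ & Hpos & Hhom & _) HF _ _ _.
exists (F Oone (ebasis 7)). split.
- apply Hpos.
  + split; unfold onS7, ebasis; oct_unfold; ring.
  + intro E. unfold ebasis, Ozero in E. injection E. lra.
- apply homogeneous_from_unit; [exact Hhom|].
  intros p x. apply unit_tangent_value, HF.
Qed.
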